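(* Let $D\subseteq\Phi^+$ be a rook placement and $\xi\colon D\to\mathbb{C}^\times$ a map. Then the subspace $\mathfrak{p}\subseteq\mathfrak{n}$ spanned by the $e_{j,i}$, $(i,j)\in\Phi^+\setminus\mathcal{M}$, is a maximal $f_{D,\xi}$-isotropic subspace of $\mathfrak{n}$; that is, $f_{D,\xi}([x,y])=0$ for all $x,y\in\mathfrak{p}$, and no subspace of $\mathfrak{n}$ strictly containing $\mathfrak{p}$ has this property.
   Context: Let $n\ge1$ and let $\mathfrak{n}$ be the Lie algebra of strictly upper-triangular complex $n\times n$ matrices; $e_{i,j}$ denotes the elementary matrix with $1$ at position $(i,j)$. Identify $\mathfrak{n}^*$ with the strictly lower-triangular matrices via $\lambda(x)=\mathrm{tr}(\lambda x)$. Let $\Phi^+=\{(i,j)\in\mathbb{Z}^2:1\le j<i\le n\}$, with rows $\mathcal{R}_k=\{(k,s)\in\Phi^+\}$ and columns $\mathcal{C}_k=\{(r,k)\in\Phi^+\}$. A rook placement is a subset $D\subseteq\Phi^+$ with $|D\cap\mathcal{R}_k|\le 1$ and $|D\cap\mathcal{C}_k|\le1$ for all $k$. For a map $\xi\colon D\to\mathbb{C}^\times$, $f_{D,\xi}=\sum_{(i,j)\in D}\xi(i,j)e_{i,j}\in\mathfrak{n}^*$. Write $D=\{(i_1,j_1),\dots,(i_s,j_s)\}$ with $j_1<\dots<j_s$. Set $\mathcal{M}_{j_0}=\emptyset$ and, recursively for $r=1,\dots,s$, $\mathcal{M}_{j_r}=\{(i_r,q)\in\Phi^+:\ j_r<q<i_r,\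 (q,j_r)\notin\bigcup_{l=0}^{r-1}\mathcal{M}_{j_l}\}$, and $\mathcal{M}=\bigcup_{r=1}^s\mathcal{M}_{j_r}$. *)

(* Indices 1..n of the paper are 0..n-1 here ('I_n). *)
From HB Require Import structures.
From mathcomp Require Import all_boot all_order all_algebra.
Set Implicit Arguments. Unset Strict Implicit. Unset Printing Implicit Defensive.
Import Order.TTheory GRing.Theory Num.Theory.
Local Open Scope ring_scope.

Definition Phi (n : nat) : {set 'I_n * 'I_n} := [set p : 'I_n * 'I_n | (p.2 < p.1)%N].

Definition rook_placement (n : nat) (D : {set 'I_n * 'I_n}) : Prop :=
  D \subset Phi n /\
  (forall k : 'I_n, #|[set p in D | p.1 == k]| <= 1)%N /\
  (forall k : 'I_n, #|[set p in D | p.2 == k]| <= 1)%N.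

Definition fDxi (C : fieldType) (n : nat) (D : {set 'I_n * 'I_n})
  (xi : 'I_n * 'I_n -> C) : 'M[C]_n :=
  \sum_(p in D) xi p *: delta_mx p.1 p.2.

Definition nspace (C : fieldType) (n : nat) : {vspace 'M[C]_n} :=
  <<[seq delta_mx p.1 p.2 | p <- enum [set p : 'I_n * 'I_n | (p.1 < p.2)%N]]>>%VS.

(* Lie bracket and evaluation of lambda in n^* (lambda(x) = tr(lambda x)) *)
Definition lie (C : fieldType) (n : nat) (x y : 'M[C]_n) : 'M[C]_n :=
  x *m y - y *m x.

Definition isotropic (C : fieldType) (n : nat) (f : 'M[C]_n)
  (V : {vspace 'M[C]_n}) : Prop :=
  forall x y, x \in V -> y \in V -> \tr (f *m lie x y) = 0.

Definition max_isotropic (C : fieldType) (n : nat) (f : 'M[C]_n)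
  (V : {vspace 'M[C]_n}) : Prop :=
  (V <= nspace C n)%VS /\ isotropic f V /\
  forall W : {vspace 'M[C]_n},
    (W <= nspace C n)%VS -> (V <= W)%VS -> isotropic f W -> W = V.

Definition Mcol (n : nat) (D : {set 'I_n * 'I_n}) (k : nat)
  (prev : {set 'I_n * 'I_n}) : {set 'I_n * 'I_n} :=
  [set p : 'I_n * 'I_n |
     [exists d in D, (d.1 == p.1) && (d.2 == k :> nat)] &&
     [&& (k < p.2)%N, (p.2 < p.1)%N &
        ~~ [exists r in prev, (r.1 == p.2) && (r.2 == k :> nat)]]].

Fixpoint Macc (n : nat) (D : {set 'I_n * 'I_n}) (k : nat) : {set 'I_n * 'I_n} :=
  match k with
  | 0 => set0
  | k'.+1 => Macc D k' :|: Mcol D k' (Macc D k')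
  end.

Definition Mset (n : nat) (D : {set 'I_n * 'I_n}) : {set 'I_n * 'I_n} := Macc D n.

Definition pspace (C : fieldType) (n : nat) (D : {set 'I_n * 'I_n})
  : {vspace 'M[C]_n} :=
  <<[seq delta_mx p.2 p.1 | p <- enum (Phi n :\: Mset D)%SET]>>%VS.

From HB Require Import structures.
From mathcomp Require Import all_boot all_order all_algebra.
Set Implicit Arguments. Unset Strict Implicit. Unset Printing Implicit Defensive.
Import Order.TTheory GRing.Theory Num.Theory.
Local Open Scope ring_scope.

(* Write M for the set built column by column from D.
   - Combinatorics of M: for (a,b) in D and b < q < a, at least one of
     (q,b), (a,q) lies in M (Mset_cover); conversely
     every (a,q) in M comes from some (a,b) in D with b < q < a and
     (q,b) notin M (Mset_witness).
   - A matrix x is "transposed-supported" on a set A of positions when x r c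
     can be nonzero only if (c,r) is in A; p is exactly the span of the
     elementary matrices transposed-supported on Phi \ M.
   - Isotropy: tr(f X Y) only involves products X k m * Y m i with (i,k) in D,
     which vanish on p by Mset_cover.
   - Maximality: for W isotropic containing p, subtract from w in W its
     projection to p; the remainder w' is supported on M, and pairing w'
     against e_{b,q} in p, with (a,b) the witness of (a,q), shows by
     induction on a that every entry of w' vanishes. *)

Section MCombinatorics.
Variables (n : nat) (D : {set 'I_n * 'I_n}).

Lemma Macc_spec k p :
  p \in Macc D k <-> exists c, (c < k)%N /\ p \in Mcol D c (Macc D c).
Proof.
elim: k => [|k IH] /=; first by split; [rewrite inE | move=> [c []]].
rewrite in_setU; split.
  case/orP => [/IH [c [ck pc]]|pc]; last by exists k.
  by exists c; split => //; apply: ltnW.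
move=> [c [ck pc]]; rewrite ltnS leq_eqVlt in ck.
case/orP: ck => [/eqP ck|ck]; first by rewrite -ck pc orbT.
by apply/orP; left; apply/IH; exists c.
Qed.

Lemma McolP k prev p : p \in Mcol D k prev ->
  [/\ (k < p.2)%N, (p.2 < p.1)%N,
      exists2 d, d \in D & (d.1 = p.1 /\ (d.2 : nat) = k) &
      ~~ [exists r in prev, (r.1 == p.2) && (r.2 == k :> nat)]].
Proof.
rewrite inE => /andP[/existsP[d /andP[dD /andP[/eqP h1 /eqP h2]]]] /and3P[a b c].
by split => //; exists d.
Qed.

Lemma Macc_mono k m : (k <= m)%N -> Macc D k \subset Macc D m.
Proof.
move=> km; apply/subsetP => p /Macc_spec [c [ck pc]]; apply/Macc_spec.
by exists c; split => //; apply: leq_trans km.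
Qed.

Lemma Mset_Macc_col p : p \in Mset D -> p \in Macc D p.2.
Proof.
move/Macc_spec => [c [_ pc]]; apply/Macc_spec; exists c; split => //.
by case: (McolP pc).
Qed.

(* For (a,b) in D and b < q < a, either (q,b) or (a,q) belongs to M:
   column b adds (a,q) to M precisely when (q,b) was not yet there. *)
Lemma Mset_cover (a b q : 'I_n) : (a, b) \in D -> (b < q)%N -> (q < a)%N ->
  ((q, b) \in Mset D) || ((a, q) \in Mset D).
Proof.
move=> abD bq qa.
case: (boolP [exists r in Macc D b, (r.1 == q) && (r.2 == b :> nat)]).
  move=> /existsP[r /andP[rM /andP[/eqP r1 /eqP r2]]].
  have -> : (q, b) = r by case: r rM r1 r2 => r1 r2 /= ? -> /val_inj ->.
  by apply/orP; left; apply: (subsetP (Macc_mono (ltnW (ltn_ord b)))).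
move=> hne; apply/orP; right.
apply: (subsetP (Macc_mono (ltn_ord b))); rewrite in_setU; apply/orP; right.
rewrite inE /= bq qa hne !andbT; apply/existsP; exists (a, b).
by rewrite abD /= !eqxx.
Qed.

Lemma Mset_witness (a q : 'I_n) : (a, q) \in Mset D ->
  exists b : 'I_n, [/\ (a, b) \in D, (b < q)%N, (q < a)%N & (q, b) \notin Mset D].
Proof.
move=> /Macc_spec [c [_ pc]]; case: (McolP pc) => /= cq qa [d dD [d1 d2]] hne.
exists d.2; split => //.
  by move: dD d1; case: d {d2} => x y /= xyD <-.
  by rewrite d2.
apply/negP => /Mset_Macc_col /= hM; case/negP: hne.
by apply/existsP; exists (q, d.2); rewrite -d2 hM /= !eqxx.
Qed.

End MCombinatorics.

Section MatrixFacts.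
Variables (C : fieldType) (n : nat).

Definition tsupported (A : {set 'I_n * 'I_n}) (x : 'M[C]_n) : Prop :=
  forall r c : 'I_n, (c, r) \notin A -> x r c = 0.

Lemma span_entry0 (s : seq 'M[C]_n) r c x :
  all (fun m : 'M[C]_n => m r c == 0) s -> x \in <<s>>%VS -> x r c = 0.
Proof.
elim: s x => [|m s IH] x /=; first by rewrite span_nil memv0 => _ /eqP ->; rewrite mxE.
move=> /andP[/eqP m0 hs]; rewrite span_cons => /memv_addP[u /vlineP[k ->] [v vs ->]].
by rewrite !mxE m0 mulr0 add0r (IH v).
Qed.

Lemma span_tdelta_tsupported (A : {set 'I_n * 'I_n}) x :
  x \in <<[seq delta_mx p.2 p.1 | p <- enum A]>>%VS -> tsupported A x.
Proof.
move=> xA r c hrc; apply: span_entry0 xA; apply/allP => m /mapP[p pA ->].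
rewrite mxE; case: (boolP (_ && _)) => [/andP[/eqP h1 /eqP h2]|]; last by rewrite eqxx.
by move: pA; rewrite mem_enum (_ : p = (c, r)) ?(negbTE hrc) //; case: p h1 h2 => ? ? /= -> ->.
Qed.

Lemma nspace_lower0 x (r c : 'I_n) : x \in nspace C n -> (c <= r)%N -> x r c = 0.
Proof.
move=> xn cr; apply: span_entry0 xn; apply/allP => m /mapP[p pin ->].
rewrite mxE; case: (boolP (_ && _)) => [/andP[/eqP h1 /eqP h2]|]; last by rewrite eqxx.
by move: pin; rewrite mem_enum inE -h1 -h2 => /leq_trans/(_ cr); rewrite ltnn.
Qed.

Lemma sum_pick (A : {set 'I_n * 'I_n}) (g : 'I_n * 'I_n -> C) u :
  \sum_(p in A) g p * (p == u)%:R = if u \in A then g u else 0.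
Proof.
case: (boolP (u \in A)) => uA.
  rewrite (bigD1 u) //= eqxx mulr1 big1 ?addr0 // => p /andP[_ /negbTE ->].
  by rewrite mulr0.
rewrite big1 // => p pA; have /negbTE -> : p != u by apply: contraNneq uA => <-.
by rewrite mulr0.
Qed.

Lemma tdelta_sum_entry (A : {set 'I_n * 'I_n}) (g : 'I_n * 'I_n -> C) r c :
  (\sum_(p in A) g p *: delta_mx p.2 p.1 : 'M[C]_n) r c
  = if (c, r) \in A then g (c, r) else 0.
Proof.
rewrite summxE -(sum_pick A g (c, r)); apply: eq_bigr => p _; rewrite !mxE.
by case: p => x y; rewrite xpair_eqE /= andbC ![_ == x]eq_sym ![_ == y]eq_sym.
Qed.

Lemma fDxi_entry (D : {set 'I_n * 'I_n}) (xi : 'I_n * 'I_n -> C) i j :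
  fDxi D xi i j = if (i, j) \in D then xi (i, j) else 0.
Proof.
rewrite /fDxi summxE -(sum_pick D xi (i, j)); apply: eq_bigr => p _; rewrite !mxE.
by case: p => x y; rewrite xpair_eqE /= ![_ == x]eq_sym ![_ == y]eq_sym.
Qed.

Lemma tr_delta_mul (b q : 'I_n) (A : 'M[C]_n) : \tr (delta_mx b q *m A) = A q b.
Proof.
rewrite /mxtrace (bigD1 b) //= big1 ?addr0.
  rewrite mxE (bigD1 q) //= big1 ?addr0; first by rewrite mxE !eqxx mul1r.
  by move=> k kq; rewrite mxE eqxx (negbTE kq) mul0r.
by move=> i ib; rewrite mxE big1 // => k _; rewrite mxE (negbTE ib) mul0r.
Qed.

Lemma tr_lie_delta (F w : 'M[C]_n) (b q : 'I_n) :
  \tr (F *m lie (delta_mx b q) w)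
  = \sum_k w q k * F k b - \sum_k F q k * w k b.
Proof.
rewrite /lie mulmxBr linearB /= mxtrace_mulC -mulmxA tr_delta_mul.
by rewrite mulmxA mxtrace_mulC tr_delta_mul !mxE.
Qed.

Lemma tr_fDxi_mul0 (D : {set 'I_n * 'I_n}) (xi : 'I_n * 'I_n -> C) (A : {set 'I_n * 'I_n}) X Y :
  (forall i k m, (i, k) \in D -> (m, k) \in A -> (i, m) \notin A) ->
  tsupported A X -> tsupported A Y -> \tr (fDxi D xi *m (X *m Y)) = 0.
Proof.
move=> hA hX hY; rewrite /mxtrace big1 // => i _; rewrite mxE big1 // => k _.
rewrite fDxi_entry; case: ifP => ikD; last by rewrite mul0r.
rewrite mxE big1 ?mulr0 // => m _.
case: (boolP ((m, k) \in A)) => hmk; last by rewrite hX // mul0r.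
by rewrite (hY m i) ?mulr0 // (hA i k m).
Qed.

End MatrixFacts.

Section Proposition.
Variables (C : fieldType) (n : nat) (D : {set 'I_n * 'I_n}) (xi : 'I_n * 'I_n -> C).
Hypothesis hcol : forall k : 'I_n, (#|[set p in D | p.2 == k]| <= 1)%N.
Hypothesis hxi : forall p, p \in D -> xi p != 0.

Let P := (Phi n :\: Mset D)%SET.
Let F := fDxi D xi.

Lemma pspace_tsupported x : x \in pspace C D -> tsupported P x.
Proof. exact: span_tdelta_tsupported. Qed.

Lemma tdelta_pspace p : p \in P -> delta_mx p.2 p.1 \in pspace C D.
Proof. by move=> pP; apply: memv_span; apply: map_f; rewrite mem_enum. Qed.

Lemma pspace_sub_nspace : (pspace C D <= nspace C n)%VS.
Proof.
apply/span_subvP => x /mapP[p pin ->]; apply: memv_span.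
apply/mapP; exists (p.2, p.1) => //; move: pin; rewrite mem_enum !inE /=.
by case/andP => _ h; rewrite mem_enum inE.
Qed.

Lemma pspace_isotropic : isotropic F (pspace C D).
Proof.
move=> x y /pspace_tsupported hx /pspace_tsupported hy.
have hP i k m : (i, k) \in D -> (m, k) \in P -> (i, m) \notin P.
  rewrite !inE /= => ikD /andP[hmk km]; apply/negP => /andP[him mi].
  by have := Mset_cover ikD km mi; rewrite (negbTE hmk) (negbTE him).
by rewrite /lie mulmxBr linearB /= (tr_fDxi_mul0 xi hP hx hy) (tr_fDxi_mul0 xi hP hy hx) subrr.
Qed.

Lemma rook_col_unique (a k b : 'I_n) : (k, b) \in D -> (a, b) \in D -> k = a.
Proof.
move=> kbD abD; have := card_le1_eqP (hcol b) (k, b) (a, b).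
by rewrite !inE kbD abD /= eqxx => /(_ isT isT) [].
Qed.

Lemma nspace_decomp w : w \in nspace C n ->
  exists2 s, s \in pspace C D & tsupported (Mset D) (w - s).
Proof.
move=> wn; exists (\sum_(p in P) w p.2 p.1 *: delta_mx p.2 p.1).
  by apply: memv_suml => p pP; apply: memvZ; apply: tdelta_pspace.
move=> r c hM; rewrite !mxE tdelta_sum_entry; case: ifP => [_|]; first by rewrite subrr.
rewrite !inE hM /= => /negbT; rewrite -leqNgt => cr.
by rewrite nspace_lower0 // subr0.
Qed.

(* In an isotropic space containing p, a matrix supported on M is zero:
   pairing it with e_{b,q} in p kills its (q,a) entry, given by induction
   that its entries in columns < a already vanish. *)
Lemma Msupported_isotropic0 (W : {vspace 'M[C]_n}) w :
  (pspace C D <= W)%VS -> isotropic F W -> w \in W ->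
  tsupported (Mset D) w -> w = 0.
Proof.
move=> hpW hWi wW hw.
suff col0 N (a q : 'I_n) : (a < N)%N -> (a, q) \in Mset D -> w q a = 0.
  apply/matrixP => r c; rewrite mxE.
  by case: (boolP ((c, r) \in Mset D)) => hM; [apply: (col0 n) | apply: hw].
elim: N a q => [//|N IH] a q aN aqM.
have [b [abD bq qa qbM]] := Mset_witness aqM.
have ebq : delta_mx b q \in W.
  by apply: (subvP hpW); apply: (tdelta_pspace (p := (q, b))); rewrite !inE qbM.
have := hWi _ _ ebq wW; rewrite tr_lie_delta.
have -> : \sum_k F q k * w k b = 0.
  apply: big1 => k _; rewrite /F fDxi_entry; case: ifP => qkD; last by rewrite mul0r.
  case: (boolP ((b, k) \in Mset D)) => bkM; last by rewrite hw ?mulr0.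
  by rewrite (IH b k) ?mulr0 // (leq_trans (ltn_trans bq qa)) // -ltnS.
rewrite subr0 (bigD1 a) //= big1 ?addr0 => [|k ka]; last first.
  rewrite /F fDxi_entry; case: ifP => kbD; last by rewrite mulr0.
  by rewrite (rook_col_unique kbD abD) eqxx in ka.
by rewrite /F fDxi_entry abD => /eqP; rewrite mulf_eq0 (negbTE (hxi abD)) orbF => /eqP.
Qed.

Lemma pspace_maximal (W : {vspace 'M[C]_n}) :
  (W <= nspace C n)%VS -> (pspace C D <= W)%VS -> isotropic F W -> W = pspace C D.
Proof.
move=> hWn hpW hWi; apply/eqP; rewrite eqEsubv hpW andbT; apply/subvP => w wW.
have [s sP hws] := nspace_decomp (subvP hWn _ wW).
have ws0 : w - s = 0.
  by apply: (Msupported_isotropic0 hpW hWi) => //; rewrite memvB // (subvP hpW).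
by move/eqP: ws0; rewrite subr_eq0 => /eqP ->.
Qed.

End Proposition.

Theorem proposition2p7 (C : numClosedFieldType) (n : nat) (hn : (1 <= n)%N)
  (D : {set 'I_n * 'I_n}) (xi : 'I_n * 'I_n -> C)
  (hD : rook_placement D) (hxi : forall p, p \in D -> xi p != 0) :
  max_isotropic (fDxi D xi) (pspace C D).
Proof.
case: hD => [_ [_ hcol]].
split; first exact: pspace_sub_nspace.
split; first exact: pspace_isotropic.
by move=> W; apply: pspace_maximal.
Qed.
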